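(* Let $\mathbf M=(\mathbb{X},\mathbb{X}_0,\mathbf{t})$ be a Markov chain with unknown transition kernel $\mathbf{t}$, and let data $\hat X=[\hat x_1,\dots,\hat x_N]^\top$, $\hat X^+=[\hat x_1^+,\dots,\hat x_N^+]^\top$ be given with $\hat x_i^+\sim\mathbf{t}(\cdot\mid X=\hat x_i)$. Let $k_+,k_x:\mathbb{X}\times\mathbb{X}\to\mathbb{R}$ be kernels with $k_+$ universal, and let $K_{\hat X}=[k_x(\hat x_i,\hat x_j)]_{i,j=1}^N$. Let $\varepsilon\ge0$ be such that the ambiguity set $\mathcal{A}^N_\varepsilon:=\{\mu\in\mathcal{G}:\|\mu-\hat\mu^N_{k_+|k_x}\|_{\mathcal{G}}\le\varepsilon\}$ satisfies $\mathbb{P}(\mu_{k_+|k_x}(\mathbf{t})\in\mathcal{A}^N_\varepsilon)\ge1-\rho$ for a given $1-\rho\in[0,1]$. Suppose there exists a function $B:\mathbb{X}\to\mathbb{R}_{\ge0}$ with $B\in\mathcal{H}_{k_+}$, a constant $\bar B\ge\|B\|_{\mathcal{H}_{k_+}}$, and a constant $c\ge0$ such that $$\forall x\in\mathbb{X}:\quad w(x)^\top B(\hat X^+)-B(x)\le c-\varepsilon\sqrt{k_x(x,x)}\,\bar B,$$ where $w(x)^\top:=k_{\hat X}(x)^\top[K_{\hat X}+N\lambda I_N]^{-1}$ with a constant $\lambda\ge0$, $k_{\hat X}(x):=[k_x(x,\hat x_i)]_{i=1}^N$, and $B(\hat X^+)=[B(\hat x_i^+)]_{i=1}^N$. Then with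 probability at least $1-\rho$, $\mathbb{E}_{\mathbf{t}}[B(X^+)\mid X=x]-B(x)\le c$ for all $x\in\mathbb{X}$.
   Context: $\mathbb{X}$ is a Polish space with Borel $\sigma$-algebra. A Markov chain $\mathbf M=(\mathbb{X},\mathbb{X}_0,\mathbf{t})$ consists of the state space $\mathbb{X}$, initial states $\mathbb{X}_0\subset\mathbb{X}$ and a probability kernel $\mathbf{t}$; given state $x$, the next state is $X^+\sim\mathbf{t}(\cdot\mid X=x)$. The data are i.i.d. with $\hat x_i$ uniform on $\mathbb{X}$. All kernels are positive definite and bounded with separable RKHSs; $\mathcal{H}_k$ is the RKHS of $k$ and $\phi_+$ the feature map of $k_+$ ($k_+(x,x')=\langle\phi_+(x),\phi_+(x')\rangle_{\mathcal{H}_{k_+}}$). $k_+$ universal means $\mathcal{H}_{k_+}$ is dense in the continuous functions. $\mathcal{G}$ is the vector-valued RKHS of functions $\mathbb{X}\to\mathcal{H}_{k_+}$ with operator-valued kernel $\Gamma(x,x')=k_x(x,x')\mathrm{Id}_{\mathcal{H}_{k_+}}$. The conditional mean embedding of $\mathbf{t}$ is $\mu_{k_+|k_x}(\mathbf{t})(x):=\mathbb{E}_{\mathbf{t}}[\phi_+(X^+)\mid X=x]$, assumed to lie in $\mathcal{G}$, and satisfies $\mathbb{E}_{\mathbf{t}}[f(X^+)\mid X=x]=\langle f,\mu_{k_+|k_x}(\mathbf{t})(x)\rangle_{\mathcal{H}_{k_+}}$ almost surely for $f\in\mathcal{H}_{k_+}$. The empirical CME is $\hat\mu^N_{k_+|k_x}(x):=k_{\hat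 X}(x)^\top[K_{\hat X}+N\lambda I_N]^{-1}[\phi_+(\hat x_i^+)]_{i=1}^N$ (the matrix $K_{\hat X}+N\lambda I_N$ is assumed invertible). The probability ''at least $1-\rho$'' refers to the randomness of the data. *)

From HB Require Import structures.
From mathcomp Require Import all_boot all_order all_algebra.
From mathcomp Require Import all_classical all_reals all_analysis.
Set Implicit Arguments. Unset Strict Implicit. Unset Printing Implicit Defensive.
Import Order.TTheory GRing.Theory Num.Theory.
Import numFieldNormedType.Exports.
Local Open Scope classical_set_scope.
Local Open Scope ring_scope.

Section Defs.
Variable R : realType.

Definition inner_product (V : lmodType R) (ip : V -> V -> R) : Prop :=
  [/\ (forall u v, ip u v = ip v u),
      (forall (a : R) u v w, ip (a *: u + v) w = a * ip u w + ip v w),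
      (forall u, 0 <= ip u u) &
      (forall u, ip u u = 0 -> u = 0)].

Definition ipnorm (V : lmodType R) (ip : V -> V -> R) (u : V) : R :=
  Num.sqrt (ip u u).

Definition ip_complete (V : lmodType R) (ip : V -> V -> R) : Prop :=
  forall u : nat -> V,
    (forall e : R, 0 < e -> exists M : nat, forall m n : nat,
        (M <= m)%N -> (M <= n)%N -> ipnorm ip (u m - u n) < e) ->
    exists v : V, forall e : R, 0 < e -> exists M : nat, forall n : nat,
        (M <= n)%N -> ipnorm ip (u n - v) < e.

Definition is_hilbert (V : lmodType R) (ip : V -> V -> R) : Prop :=
  inner_product ip /\ ip_complete ip.

Definition ip_separable (V : lmodType R) (ip : V -> V -> R) : Prop :=
  exists D : set V, countable D /\
    forall v e, 0 < e -> exists d, D d /\ ipnorm ip (v - d) < e.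

(** [(V, ip)] realised through the evaluation map [ev] (an injective linear
    map into functions X -> R) is the RKHS H_k of the kernel [k], with
    feature map [phi] (phi x = k(., x)) and reproducing property. *)
Definition is_rkhs (X : Type) (k : X -> X -> R)
    (V : lmodType R) (ip : V -> V -> R) (ev : V -> X -> R) (phi : X -> V) : Prop :=
  [/\ is_hilbert ip,
      (forall (a : R) u v, ev (a *: u + v) = (fun x => a * ev u x + ev v x)),
      injective ev,
      (forall x y, ev (phi x) y = k y x) &
      (forall f x, ev f x = ip f (phi x))].

(** Vector-valued RKHS G of functions X -> V (V with inner product ipH)
    with operator-valued kernel Gamma(x,x') = k(x,x') Id_V.
    [evG] realises elements of G as functions; [Gam x h] is Gamma(., x) h. *)
Definition is_vvrkhs (X : Type) (k : X -> X -> R)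
    (V : lmodType R) (ipH : V -> V -> R)
    (W : lmodType R) (ipG : W -> W -> R)
    (evG : W -> X -> V) (Gam : X -> V -> W) : Prop :=
  [/\ is_hilbert ipG,
      (forall (a : R) u v, evG (a *: u + v) = (fun x => a *: evG u x + evG v x)),
      injective evG,
      (forall x h y, evG (Gam x h) y = k y x *: h) &
      (forall g x h, ipH (evG g x) h = ipG g (Gam x h))].

Definition pd_kernel (X : Type) (k : X -> X -> R) : Prop :=
  (forall x y, k x y = k y x) /\
  forall (n : nat) (xs : 'I_n -> X) (a : 'I_n -> R),
    0 <= \sum_(i < n) \sum_(j < n) a i * a j * k (xs i) (xs j).

Definition bounded_kernel (X : Type) (k : X -> X -> R) : Prop :=
  exists M : R, forall x y, `|k x y| <= M.

Definition universal_rkhs (X : topologicalType) (V : lmodType R)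
    (ev : V -> X -> R) : Prop :=
  forall f : X -> R, continuous f ->
  forall K : set X, compact K ->
  forall e : R, 0 < e -> exists h : V, forall x, K x -> `|ev h x - f x| < e.

(** Polish space given as a complete pseudometric space that is Hausdorff
    (hence metric) and separable. *)
Definition polish_cpm (X : completePseudoMetricType R) : Prop :=
  hausdorff_space X /\ exists D : set X, countable D /\ closure D = setT.

Definition gram (X : Type) (N : nat) (k : X -> X -> R) (xs : 'I_N -> X)
  : 'M[R]_N := \matrix_(i, j) k (xs i) (xs j).

Definition reg_gram (X : Type) (N : nat) (k : X -> X -> R) (xs : 'I_N -> X)
    (lam : R) : 'M[R]_N :=
  gram k xs + (N%:R * lam)%:M.

Definition cme_weights (X : Type) (N : nat) (k : X -> X -> R) (xs : 'I_N -> X)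
    (lam : R) (x : X) : 'rV[R]_N :=
  (\row_j k x (xs j)) *m invmx (reg_gram k xs lam).

Definition emp_cme (X : Type) (N : nat) (k : X -> X -> R) (xs xps : 'I_N -> X)
    (lam : R) (V : lmodType R) (phi : X -> V) (x : X) : V :=
  \sum_(i < N) (cme_weights k xs lam x) ord0 i *: phi (xps i).

End Defs.

From HB Require Import structures.
From mathcomp Require Import all_boot all_order all_algebra.
From mathcomp Require Import all_classical all_reals all_analysis.
From mathcomp Require Import ring lra.
Set Implicit Arguments. Unset Strict Implicit. Unset Printing Implicit Defensive.
Import Order.TTheory GRing.Theory Num.Theory.
Import numFieldNormedType.Exports.
Local Open Scope classical_set_scope.
Local Open Scope ring_scope.

(** On the event that the true conditional mean embedding mu lies in the
    ambiguity ball around the empirical one mu_hat, write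
    E[B(X+) | x] = <B, mu(x)> = <B, mu_hat(x)> + <B, (mu - mu_hat)(x)>.
    By the reproducing property the first term is w(x)^T B(X+); the second is
    <Gamma(., x) B, mu - mu_hat>_G, which Cauchy-Schwarz bounds by
    eps * ||Gamma(., x) B||_G = eps * sqrt(k_x(x, x)) * ||B||, and the drift
    condition absorbs exactly this margin. *)

Section InnerProduct.
Variables (R : realType) (V : lmodType R) (ip : V -> V -> R).
Hypothesis hip : inner_product ip.

Lemma ip0l w : ip 0 w = 0.
Proof.
case: hip => _ hl _ _.
have := hl 1 0 0 w; rewrite scaler0 addr0 mul1r => h.
by apply: (@addrI _ (ip 0 w)); rewrite addr0 -h.
Qed.

Lemma ipDl u v w : ip (u + v) w = ip u w + ip v w.
Proof. by case: hip => _ hl _ _; rewrite -[u in LHS]scale1r hl mul1r. Qed.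

Lemma ipZl a u w : ip (a *: u) w = a * ip u w.
Proof. by case: hip => _ hl _ _; rewrite -[a *: u]addr0 hl ip0l addr0. Qed.

Lemma ipDr u v w : ip w (u + v) = ip w u + ip w v.
Proof. by case: hip => hs _ _ _; rewrite hs ipDl (hs u) (hs v). Qed.

Lemma ipZr a u w : ip w (a *: u) = a * ip w u.
Proof. by case: hip => hs _ _ _; rewrite hs ipZl hs. Qed.

Lemma ip_sumr (n : nat) (a : 'I_n -> R) (f : 'I_n -> V) w :
  ip w (\sum_(i < n) a i *: f i) = \sum_(i < n) a i * ip w (f i).
Proof.
apply: (big_ind2 (fun x y => ip w x = y)).
- by case: hip => hs _ _ _; rewrite hs ip0l.
- by move=> x1 x2 y1 y2 <- <-; rewrite ipDr.
- by move=> i _; rewrite ipZr.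
Qed.

Lemma ip_le_ipnormM u v : ip u v <= ipnorm ip u * ipnorm ip v.
Proof.
case: hip => hs _ hpos hdef; rewrite /ipnorm.
have [/hdef->|uu_neq0] := eqVneq (ip u u) 0; first by rewrite !ip0l sqrtr0 mul0r.
have [/hdef->|vv_neq0] := eqVneq (ip v v) 0.
  by rewrite hs !ip0l sqrtr0 mulr0.
set nu := Num.sqrt (ip u u); set nv := Num.sqrt (ip v v).
have nu_gt0 : 0 < nu by rewrite sqrtr_gt0 lt_def uu_neq0 hpos.
have nv_gt0 : 0 < nv by rewrite sqrtr_gt0 lt_def vv_neq0 hpos.
have nu2 : nu ^+ 2 = ip u u by rewrite sqr_sqrtr.
have nv2 : nv ^+ 2 = ip v v by rewrite sqr_sqrtr.
(* expand [0 <= ||nv u - nu v||^2] *)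
have := hpos (nv *: u - nu *: v).
rewrite ipDl ipDr !ipDr -!scaleNr !ipZl !ipZr (hs v u) -nu2 -nv2 => H.
have : 0 < nu * nv by rewrite mulr_gt0.
nra.
Qed.

End InnerProduct.

Lemma rkhs_ip_emp_cme (R : realType) (X : Type) (kp : X -> X -> R)
    (V : lmodType R) (ip : V -> V -> R) (ev : V -> X -> R) (phi : X -> V)
    (hH : is_rkhs kp ip ev phi)
    (N : nat) (k : X -> X -> R) (xs xps : 'I_N -> X) (lam : R) (b : V) x :
  ip b (emp_cme k xs xps lam phi x) =
  \sum_(i < N) cme_weights k xs lam x ord0 i * ev b (xps i).
Proof.
case: hH => [[hip _] _ _ _ hev]; rewrite /emp_cme ip_sumr //.
by apply: eq_bigr => i _; rewrite hev.
Qed.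

Lemma pd_kernel_diag_ge0 (R : realType) (X : Type) (k : X -> X -> R) x :
  pd_kernel k -> 0 <= k x x.
Proof. by case=> _ /(_ 1%N (fun _ => x) (fun _ => 1)); rewrite !big_ord1 !mul1r. Qed.

Section VectorValuedRKHS.
Variables (R : realType) (X : Type) (k : X -> X -> R).
Variables (V : lmodType R) (ipH : V -> V -> R).
Variables (W : lmodType R) (ipG : W -> W -> R).
Variables (evG : W -> X -> V) (Gam : X -> V -> W).
Hypotheses (hk : pd_kernel k) (hG : is_vvrkhs k ipH ipG evG Gam).
Hypothesis hipH : inner_product ipH.

Lemma vvrkhs_evB g g' x : evG (g - g') x = evG g x - evG g' x.
Proof.
case: hG => _ hlin _ _ _.
have -> : g - g' = (-1) *: g' + g by rewrite scaleN1r addrC.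
by rewrite hlin scaleN1r addrC.
Qed.

Lemma vvrkhs_ipnorm_Gam x h :
  ipnorm ipG (Gam x h) = Num.sqrt (k x x) * ipnorm ipH h.
Proof.
case: hG => _ _ _ hGam hip.
by rewrite /ipnorm -hip hGam ipZl // sqrtrM // pd_kernel_diag_ge0.
Qed.

Lemma vvrkhs_ip_eval_le g x h :
  ipH h (evG g x) <= ipnorm ipG g * Num.sqrt (k x x) * ipnorm ipH h.
Proof.
case: hG => [[hipG _] _ _ _ hip]; case: hipH => hs _ _ _.
by rewrite hs hip -mulrA -vvrkhs_ipnorm_Gam ip_le_ipnormM.
Qed.

Lemma vvrkhs_ip_eval_ball g g' x h (eps Bbar : R) :
  ipnorm ipG (g - g') <= eps -> ipnorm ipH h <= Bbar ->
  ipH h (evG g x) <= ipH h (evG g' x) + eps * Num.sqrt (k x x) * Bbar.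
Proof.
move=> gg'_le hB.
have -> : evG g x = evG (g - g') x + evG g' x by rewrite vvrkhs_evB subrK.
rewrite ipDr // addrC lerD2l.
apply: le_trans (vvrkhs_ip_eval_le _ _ _) _.
rewrite ler_pM ?mulr_ge0 ?sqrtr_ge0 ?ler_wpM2r ?sqrtr_ge0 //.
Qed.

End VectorValuedRKHS.

Theorem theorem2
  (R : realType)
  (* state space: Polish, with Borel sigma-algebra *)
  (X : completePseudoMetricType R)
  (hX : polish_cpm X)
  (* unknown transition kernel t of the Markov chain *)
  (t : R.-pker (g_sigma_algebraType (@open X)) ~> (g_sigma_algebraType (@open X)))
  (* kernel k_+ with its RKHS H_{k+} *)
  (kp : X -> X -> R) (VH : lmodType R) (ipH : VH -> VH -> R)
  (evH : VH -> X -> R) (phip : X -> VH)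
  (hH : is_rkhs kp ipH evH phip) (hkp_bdd : bounded_kernel kp)
  (hH_sep : ip_separable ipH) (hkp_univ : universal_rkhs evH)
  (* kernel k_x and the vector-valued RKHS G *)
  (kx : X -> X -> R) (hkx_pd : pd_kernel kx) (hkx_bdd : bounded_kernel kx)
  (VG : lmodType R) (ipG : VG -> VG -> R)
  (evG : VG -> X -> VH) (Gam : X -> VH -> VG)
  (hG : is_vvrkhs kx ipH ipG evG Gam) (hG_sep : ip_separable ipG)
  (* conditional mean embedding of t, assumed to lie in G *)
  (mu : X -> VH)
  (hmu : forall (x : X) (f : VH),
      (ipH f (mu x))%:E = (\int[t x]_y (evH f y)%:E)%E)
  (gmu : VG) (hgmu : evG gmu = mu)
  (* probability space carrying the data *)
  (dO : measure_display) (Omega : measurableType dO) (P : probability Omega R)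
  (N : nat)
  (xh xp : 'I_N -> Omega -> g_sigma_algebraType (@open X))
  (hxh_meas : forall i, measurable_fun setT (xh i))
  (hxp_meas : forall i, measurable_fun setT (xp i))
  (hxp_law : forall i (A B : set (g_sigma_algebraType (@open X))),
      measurable A -> measurable B ->
      P (xh i @^-1` A `&` xp i @^-1` B) =
      (\int[P]_(w in xh i @^-1` A) t (xh i w) B)%E)
  (* regularisation and invertibility *)
  (lam : R) (hlam : 0 <= lam)
  (hinv : forall w : Omega,
      reg_gram kx (fun i => xh i w) lam \in unitmx)
  (* ambiguity set with confidence 1 - rho *)
  (eps rho : R) (heps : 0 <= eps) (hrho0 : 0 <= 1 - rho) (hrho1 : 1 - rho <= 1)
  (hAmeas : measurable [set w : Omega | exists g : VG,
      evG g = emp_cme kx (fun i => xh i w) (fun i => xp i w) lam phip /\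
      ipnorm ipG (gmu - g) <= eps])
  (hAprob : ((1 - rho)%:E <= P [set w : Omega | exists g : VG,
      evG g = emp_cme kx (fun i => xh i w) (fun i => xp i w) lam phip /\
      (ipnorm ipG (gmu - g) <= eps)%R])%E) :
  exists F : set Omega,
    [/\ measurable F, ((1 - rho)%:E <= P F)%E &
    forall w : Omega, F w ->
    forall (b : VH) (Bbar c : R),
      (forall x, 0 <= evH b x) ->
      ipnorm ipH b <= Bbar ->
      0 <= c ->
      (forall x : X,
        \sum_(i < N) (cme_weights kx (fun j => xh j w) lam x) ord0 i
                     * evH b (xp i w) - evH b x
          <= c - eps * Num.sqrt (kx x x) * Bbar) ->
      forall x : X,
        ((\int[t x]_y (evH b y)%:E) - (evH b x)%:E <= c%:E)%E].
Proof.
eexists; split; [exact: hAmeas | exact: hAprob |].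
move=> w [g [hg g_near]] b Bbar c _ hbB _ drift x.
have [[ipHp _] _ _ _ _] := hH.
rewrite -hmu -hgmu -EFinB lee_fin.
have := vvrkhs_ip_eval_ball hkx_pd hG ipHp x g_near hbB.
rewrite hg (rkhs_ip_emp_cme hH).
have := drift x; lra.
Qed.
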